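(* Let $X=[n]$, $\mathcal{A}\subseteq X^{(r)}$ and $\mathcal{B}=X^{(r)}\setminus\mathcal{A}$. Suppose that $\partial^{-t}\mathcal{A}$ and $\partial^{+t}\mathcal{B}$ are minimal for all integers $t>0$. Then $\mathcal{A}$ is isomorphic to an initial segment of the colexicographic order on $X^{(r)}$.
   Context: $X^{(r)}=\{B\subseteq[n]:|B|=r\}$. Lower shadow: $\partial\mathcal{F}=\partial^{-}\mathcal{F}=\{B: B\cup\{i\}\in\mathcal{F}\text{ for some } i\notin B\}$, and $\partial^{-t}\mathcal{F}=\partial(\partial^{-(t-1)}\mathcal{F})$. Upper shadow: $\partial^{+}\mathcal{F}=\{B\cup\{i\}: i\in[n]\setminus B,\ B\in\mathcal{F}\}$, and $\partial^{+t}\mathcal{F}=\partial^{+}(\partial^{+(t-1)}\mathcal{F})$. For $\mathcal{F}\subseteq X^{(r)}$, $\partial^{\pm t}\mathcal{F}$ is minimal if $|\partial^{\pm t}\mathcal{F}|\le|\partial^{\pm t}\mathcal{G}|$ for every $\mathcal{G}\subseteq X^{(r)}$ with $|\mathcal{G}|=|\mathcal{F}|$. Colexicographic order: $A<_{colex}B$ iff $\max(A\Delta B)\in B$. $\mathcal{A}$ is isomorphic to $\mathcal{C}$ if there is a permutation $\sigma$ of $[n]$ with $\{\sigma(A):A\in\mathcal{A}\}=\mathcal{C}$. *)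

From mathcomp Require Import all_boot all_fingroup.
Set Implicit Arguments. Unset Strict Implicit. Unset Printing Implicit Defensive.

(* Ground set X = [n] is modelled as 'I_n (elements 0..n-1). *)
Section Defs.
Variable n : nat.
Local Notation fam := {set {set 'I_n}}.

Definition layer (r : nat) : fam := [set B : {set 'I_n} | #|B| == r].

Definition lshadow (F : fam) : fam :=
  [set B : {set 'I_n} | [exists i : 'I_n, (i \notin B) && (B :|: [set i] \in F)]].

Definition ushadow (F : fam) : fam :=
  [set C : {set 'I_n} | [exists B in F, exists i : 'I_n,
      (i \notin B) && (C == B :|: [set i])]].

Definition lshadow_iter (t : nat) (F : fam) : fam := iter t lshadow F.
Definition ushadow_iter (t : nat) (F : fam) : fam := iter t ushadow F.

Definition lshadow_minimal (r t : nat) (F : fam) : Prop :=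
  forall G : fam, G \subset layer r -> #|G| = #|F| ->
    #|lshadow_iter t F| <= #|lshadow_iter t G|.

Definition ushadow_minimal (r t : nat) (F : fam) : Prop :=
  forall G : fam, G \subset layer r -> #|G| = #|F| ->
    #|ushadow_iter t F| <= #|ushadow_iter t G|.

Definition colex_lt (A B : {set 'I_n}) : bool :=
  [exists x : 'I_n, [&& x \in B, x \notin A &
     [forall y : 'I_n, (y \in (A :\: B) :|: (B :\: A)) ==> (y <= x)%N]]].

Definition colex_initial_segment (r : nat) (C : fam) : Prop :=
  C \subset layer r /\
  forall B D : {set 'I_n}, B \in C -> D \in layer r -> colex_lt D B -> D \in C.

Definition fam_isomorphic (A C : fam) : Prop :=
  exists s : {perm 'I_n}, [set [set s x | x in B] | B : {set 'I_n} in A] = C.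
End Defs.

From mathcomp Require Import all_boot all_fingroup zify.
Set Implicit Arguments. Unset Strict Implicit. Unset Printing Implicit Defensive.

(* Induct on the size k + 1 of the ground set X, for A in X^(r) with
   complement B; unless X^(r) has at most one member, 0 < r <= k.
   If |A| <= C(k, r), some x in X lies in no member of A: otherwise the
   (r-1)-fold lower shadow of A contains all k + 1 singletons of X, whereas
   |A| r-sets avoiding a fixed point have at most k singletons there.  Dually,
   if |A| > C(k, r), some x lies in every member of B: otherwise the
   (k-r)-fold upper shadow of B contains all k + 1 co-singletons of X, whereas
   |B| r-sets through a fixed point reach only the k co-singletons through it.
   In the first case A lives on X - x; in the second A consists of all
   r-subsets of X - x together with x + E for E in the link A(x).  Either way
   each shadow involved splits into a disjoint union of a part computed on
   X - x and a part not depending on the family, so the minimality hypotheses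
   descend to X - x, and sending x to the largest point extends the colex
   initial segment obtained by induction. *)

Lemma cardsU_disjoint (T : finType) (A B : {set T}) :
  [disjoint A & B] -> #|A :|: B| = #|A| + #|B|.
Proof. by move=> dAB; apply/eqP; rewrite (leq_card_setU A B).2. Qed.

Lemma exists_in_setU (T : finType) (A B : {set T}) (P : pred T) :
  [exists z in A :|: B, P z] = [exists z in A, P z] || [exists z in B, P z].
Proof.
apply/exists_inP/orP => [[z]|[] /exists_inP [z zAB Pz]]; last 2 first.
- by exists z; rewrite // inE zAB.
- by exists z; rewrite // inE zAB orbT.
by rewrite inE => /orP [] zAB Pz; [left | right]; apply/exists_inP; exists z.
Qed.

Lemma card_subsetD (T : finType) (C E : {set T}) :
  E \subset C -> #|C| = #|E| + #|C :\: E|.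
Proof. by move=> sEC; rewrite -(cardsID E C) (setIidPr sEC). Qed.

Lemma cardsD_setU1 (T : finType) (i : T) (C D : {set T}) :
  i \in C -> i \notin D -> #|C :\: D| = #|C :\: (D :|: [set i])|.+1.
Proof. by move=> iC iD; rewrite (cardsD1 i) !inE iC iD setDDl. Qed.

Lemma cardsU1D (T : finType) (i : T) (C D : {set T}) :
  i \notin C -> i \notin D -> #|(i |: C) :\: D| = #|C :\: D|.+1.
Proof.
move=> iC iD; rewrite setDUl (setDidPl _) ?disjoints1 // cardsU1.
by rewrite inE (negbTE iC) andbF.
Qed.

Lemma setU1D (T : finType) (i : T) (C D : {set T}) :
  i \notin C -> (i |: C) :\: (i |: D) = C :\: D.
Proof.
move=> iC; apply/setP => z; rewrite !inE.
by case: (z =P i) => [->|]; rewrite ?(negbTE iC) ?andbF.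
Qed.

Lemma card_imset_setU1 (T : finType) (x : T) (F : {set {set T}}) :
  {in F, forall E : {set T}, x \notin E} -> #|[set x |: E | E in F]| = #|F|.
Proof.
move=> xF; apply: card_in_imset => E1 E2 E1F E2F eqE.
by rewrite -(setU1K (xF _ E1F)) eqE setU1K // xF.
Qed.

Lemma exists_subset_card (T : finType) (F : {set T}) m :
  m <= #|F| -> exists2 G : {set T}, G \subset F & #|G| = m.
Proof.
move=> le_mF; have : 0 < #|[set G : {set T} | G \subset F & #|G| == m]|.
  by rewrite cards_draws bin_gt0.
by case/card_gt0P => G; rewrite inE => /andP [sGF /eqP cG]; exists G.
Qed.

Lemma perm_imset_of_card (T : finType) (X Y : {set T}) :
  #|X| = #|Y| -> exists s : {perm T}, s @: X = Y.
Proof.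
move: {2}#|X| (erefl #|X|) => k; elim: k X Y => [|k IH] X Y cX cXY.
  move: cXY; rewrite cX => /esym/eqP; move/eqP: cX; rewrite !cards_eq0.
  by move=> /eqP -> /eqP ->; exists 1%g; rewrite imset0.
have /card_gt0P [x xX] : 0 < #|X| by rewrite cX.
have /card_gt0P [y yY] : 0 < #|Y| by rewrite -cXY cX.
have cX' : #|X :\ x| = k by move: cX; rewrite (cardsD1 x) xX => -[].
have cY' : #|Y :\ y| = k by move: cXY; rewrite cX (cardsD1 y) yY => -[].
have [s sXY] := IH _ _ cX' (etrans cX' (esym cY')).
exists (s * tperm (s x) y)%g.
rewrite -(setD1K xX) imsetU1 permM tpermL -[in RHS](setD1K yY); congr (_ |: _).
rewrite -sXY; apply: eq_in_imset => z zX; rewrite permM tpermD //.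
  by apply: contraTneq zX => /perm_inj ->; rewrite !inE eqxx.
by apply: contraTneq (imset_f s zX) => <-; rewrite sXY !inE eqxx.
Qed.

Section Shadows.
Variable T : finType.
Local Notation fam := {set {set T}}.
Implicit Types (X Y C D E : {set T}) (A F G : fam) (x i : T) (r t : nat).

Definition layer_on X r : fam := [set E : {set T} | E \subset X & #|E| == r].
Definition star_on X x r : fam := [set E in layer_on X r | x \in E].
(* [shadow] is [lshadow] over an arbitrary finite type; the upper shadow is
   taken inside the ground set X, which shrinks along the induction. *)
Definition shadow F : fam :=
  [set D : {set T} | [exists i, (i \notin D) && (D :|: [set i] \in F)]].
Definition ushadow_on X F : fam := [set C : {set T} | (C \subset X) &&
  [exists B in F, exists i, (i \notin B) && (C == B :|: [set i])]].

Lemma card_layer_on X r : #|layer_on X r| = 'C(#|X|, r).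
Proof. exact: cards_draws. Qed.

Lemma layer_onS X Y r : X \subset Y -> layer_on X r \subset layer_on Y r.
Proof.
move=> sXY; apply/subsetP => E; rewrite !inE => /andP [sEX ->].
by rewrite (subset_trans sEX sXY).
Qed.

Lemma layer_on_powerset X r : layer_on X r \subset powerset X.
Proof. by apply/subsetP => E; rewrite !inE => /andP []. Qed.

Lemma star_on_layer_on X x r : star_on X x r \subset layer_on X r.
Proof. by apply/subsetP => E; rewrite inE => /andP []. Qed.

Lemma layer_on_D1 X x r : layer_on X r = layer_on (X :\ x) r :|: star_on X x r.
Proof.
by apply/setP => E; rewrite !inE subsetD1; case: (x \in E); rewrite ?andbT ?andbF ?orbF.
Qed.

Lemma notin_layer_on_D1 X x r E : E \in layer_on (X :\ x) r -> x \notin E.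
Proof. by rewrite inE subsetD1 => /andP [/andP []]. Qed.

Lemma sub_layer_on_D1 X x r A :
  A \subset layer_on X r -> {in A, forall E, x \notin E} ->
  A \subset layer_on (X :\ x) r.
Proof.
move=> sAL xA; apply/subsetP => E EA; move: (subsetP sAL E EA).
by rewrite !inE subsetD1 (xA E EA) andbT.
Qed.

Lemma star_on_powerset X x r : star_on X x r \subset powerset X.
Proof. exact: subset_trans (star_on_layer_on X x r) (layer_on_powerset X r). Qed.

Lemma disjoint_layer_on_star F X x r s :
  F \subset layer_on (X :\ x) r -> [disjoint F & star_on X x s].
Proof.
move=> sFL; apply/pred0P => E /=; case EF: (E \in F) => //=.
by rewrite inE (negbTE (notin_layer_on_D1 (subsetP sFL E EF))) andbF.
Qed.

Lemma star_onE X x r : x \in X ->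
  star_on X x r.+1 = [set x |: E | E in layer_on (X :\ x) r].
Proof.
move=> xX; apply/setP => C; apply/idP/imsetP => [|[E]].
  rewrite !inE => /andP [/andP [sCX cC] xC]; exists (C :\ x); last by rewrite setD1K.
  by rewrite inE setSD //= (cardsD1 x) xC in cC *.
rewrite !inE subsetD1 => /andP [/andP [sEX xE] /eqP cE] ->.
by rewrite !inE subUset sub1set xX sEX cardsU1 xE cE eqxx /= add1n eqxx.
Qed.

Lemma card_star_on X x r : x \in X -> #|star_on X x r.+1| = 'C(#|X :\ x|, r).
Proof.
move=> xX; rewrite star_onE // card_imset_setU1 ?card_layer_on //.
exact: notin_layer_on_D1.
Qed.

Lemma shadow_iterE t F :
  iter t shadow F =
  [set D : {set T} | [exists E in F, (D \subset E) && (#|E :\: D| == t)]].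
Proof.
elim: t => [|t IH]; apply/setP => D; rewrite [in RHS]inE.
  apply/idP/exists_inP => [DF|[E EF /andP [sDE]]].
    by exists D; rewrite // subxx setDv cards0.
  rewrite cards_eq0 setD_eq0 => sED.
  by rewrite (_ : D = E) //; apply/eqP; rewrite eqEsubset sDE.
rewrite iterS [in LHS]inE IH.
apply/existsP/exists_inP => [[i /andP [iD]]|[E EF /andP [sDE /eqP cE]]].
  rewrite inE => /exists_inP [E EF /andP [sDiE /eqP cE]].
  move: sDiE; rewrite subUset sub1set => /andP [sDE iE].
  by exists E; rewrite // sDE (cardsD_setU1 iE iD) cE eqxx.
have /card_gt0P [i] : 0 < #|E :\: D| by rewrite cE.
rewrite inE => /andP [iD iE]; exists i; rewrite iD inE; apply/exists_inP; exists E => //.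
by rewrite subUset sDE sub1set iE -eqSS -(cardsD_setU1 iE iD) cE eqxx.
Qed.

Lemma ushadow_on_iterE X t F : F \subset powerset X ->
  iter t (ushadow_on X) F =
  [set C : {set T} |
    (C \subset X) && [exists E in F, (E \subset C) && (#|C :\: E| == t)]].
Proof.
move=> sFX; elim: t => [|t IH]; apply/setP => C; rewrite [in RHS]inE.
  apply/idP/andP => [CF|[sCX /exists_inP [E EF /andP [sEC]]]].
    split; first by rewrite -powersetE (subsetP sFX).
    by apply/exists_inP; exists C; rewrite // subxx setDv cards0.
  rewrite cards_eq0 setD_eq0 => sCE.
  by rewrite (_ : C = E) //; apply/eqP; rewrite eqEsubset sCE.
rewrite iterS [in LHS]inE IH; apply/andP/andP => -[sCX].
  case/exists_inP => B; rewrite inE => /andP [sBX].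
  case/exists_inP => E EF /andP [sEB /eqP cE].
  case/existsP=> i /andP [iB /eqP defC]; split => //; apply/exists_inP; exists E => //.
  have sEC : E \subset C by rewrite defC (subset_trans sEB) ?subsetUl.
  have iC : i \in C by rewrite defC !inE eqxx orbT.
  have iE : i \notin E by apply: contra iB; apply: (subsetP sEB).
  by rewrite sEC defC setUC cardsU1D // cE eqxx.
move=> /exists_inP [E EF /andP [sEC /eqP cE]].
have /card_gt0P [i] : 0 < #|C :\: E| by rewrite cE.
rewrite inE => /andP [iE iC]; split => //; apply/exists_inP; exists (C :\ i).
  rewrite inE (subset_trans (subD1set C i) sCX); apply/exists_inP; exists E => //.
  by rewrite subsetD1 sEC iE -eqSS -(cardsU1D (i := i)) ?setD1K ?cE ?eqxx // !inE eqxx.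
by apply/existsP; exists i; rewrite !inE eqxx /= setUC setD1K.
Qed.

Lemma shadow_iterU t F G :
  iter t shadow (F :|: G) = iter t shadow F :|: iter t shadow G.
Proof.
by apply/setP => D; rewrite in_setU !shadow_iterE !in_set; apply: exists_in_setU.
Qed.

Lemma shadow_iter_notin t x F :
  {in F, forall E, x \notin E} -> {in iter t shadow F, forall D, x \notin D}.
Proof.
move=> xF D; rewrite shadow_iterE inE => /exists_inP [E EF /andP [sDE _]].
exact: contra (subsetP sDE x) (xF E EF).
Qed.

Lemma shadow_iter_layer_on X r t F :
  F \subset layer_on X (r + t) -> iter t shadow F \subset layer_on X r.
Proof.
move=> sFL; apply/subsetP => D; rewrite shadow_iterE inE.
case/exists_inP => E /(subsetP sFL); rewrite inE => /andP [sEX /eqP cE].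
case/andP => sDE /eqP cED.
by rewrite inE (subset_trans sDE sEX) -(eqn_add2r t) -cE (card_subsetD sDE) cED eqxx.
Qed.

Lemma shadow_iter_setU1 t x F : {in F, forall E, x \notin E} ->
  [set D in iter t shadow [set x |: E | E in F] | x \in D] =
  [set x |: D | D in iter t shadow F].
Proof.
move=> xF; apply/setP => D; rewrite !shadow_iterE !inE; apply/andP/imsetP.
  case=> /exists_inP [_ /imsetP [E EF ->] /andP [sDxE /eqP cD]] xD.
  have xE := xF E EF.
  exists (D :\ x); last by rewrite setD1K.
  rewrite inE; apply/exists_inP; exists E; rewrite // subDset sDxE /=.
  suff -> : E :\: (D :\ x) = (x |: E) :\: D by rewrite cD.
  apply/setP => z; rewrite !inE.
  by case: (z =P x) => [->|]; rewrite ?xD ?(negbTE xE) ?andbF.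
case=> d; rewrite inE => /exists_inP [E EF /andP [sdE /eqP cd]] ->.
have xE := xF E EF; have xd : x \notin d := contra (subsetP sdE x) xE.
split; last by rewrite setU11.
apply/exists_inP; exists (x |: E); first exact: imset_f.
by rewrite setUS //= setU1D // cd eqxx.
Qed.

Lemma shadow_iter_setU1_notin X x r t F D :
  F \subset layer_on (X :\ x) r -> r < #|X :\ x| ->
  D \in iter t shadow [set x |: E | E in F] -> x \notin D ->
  D \in iter t shadow (layer_on (X :\ x) r.+1).
Proof.
move=> sFL ltrX; rewrite !shadow_iterE !inE.
case/exists_inP => _ /imsetP [E EF ->] /andP [sDxE /eqP cD] xD.
have EL := subsetP sFL E EF; have xE := notin_layer_on_D1 EL.
move: EL; rewrite inE => /andP [sEX /eqP cE].
have sDE : D \subset E by rewrite -(setU1K xE) subsetD1 sDxE.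
have /card_gt0P [y] : 0 < #|X :\ x :\: E| by rewrite cardsDS // cE subn_gt0.
rewrite inE => /andP [yE yX]; have yD : y \notin D := contra (subsetP sDE y) yE.
apply/exists_inP; exists (y |: E).
  by rewrite inE subUset sub1set yX sEX cardsU1 yE cE /= add1n eqxx.
by rewrite (subset_trans sDE (subsetU1 _ _)) cardsU1D // -(cardsU1D xE xD) cD eqxx.
Qed.

Lemma card_shadow_iter_link X x r t F :
  F \subset layer_on (X :\ x) r -> r < #|X :\ x| ->
  #|iter t shadow (layer_on (X :\ x) r.+1 :|: [set x |: E | E in F])| =
  #|iter t shadow (layer_on (X :\ x) r.+1)| + #|iter t shadow F|.
Proof.
move=> sFL ltrX; set L := layer_on (X :\ x) r.+1.
have xF : {in F, forall E, x \notin E}.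
  by move=> E /(subsetP sFL); apply: notin_layer_on_D1.
have xL : {in iter t shadow L, forall D, x \notin D}.
  by apply: shadow_iter_notin => E; apply: notin_layer_on_D1.
rewrite -(card_imset_setU1 (shadow_iter_notin xF)) -shadow_iter_setU1 //.
rewrite -cardsU_disjoint; last first.
  by apply/pred0P => D /=; rewrite inE; apply/negbTE/and3P => -[/xL /negP nxD _ /nxD].
apply: eq_card => D; rewrite shadow_iterU !inE.
case xD: (x \in D); first by rewrite andbT.
rewrite andbF orbF; apply/orP/idP => [[//|]|]; last by left.
by move/shadow_iter_setU1_notin; apply => //; rewrite xD.
Qed.

Lemma ushadow_on_iterS X t F G : G \subset powerset X -> F \subset G ->
  iter t (ushadow_on X) F \subset iter t (ushadow_on X) G.
Proof.
move=> sGX sFG; apply/subsetP => C.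
rewrite !ushadow_on_iterE ?(subset_trans sFG) // !inE.
case/andP => -> /exists_inP [E EF PE].
by apply/exists_inP; exists E; rewrite // (subsetP sFG).
Qed.

Lemma ushadow_on_iterU X t F G : F \subset powerset X -> G \subset powerset X ->
  iter t (ushadow_on X) (F :|: G) =
  iter t (ushadow_on X) F :|: iter t (ushadow_on X) G.
Proof.
move=> sFX sGX; apply/setP => C.
rewrite in_setU !ushadow_on_iterE ?subUset ?sFX // !in_set -andb_orr.
congr (_ && _); exact: exists_in_setU.
Qed.

Lemma ushadow_on_iter_layer_on X r t F :
  F \subset layer_on X r -> iter t (ushadow_on X) F \subset layer_on X (r + t).
Proof.
move=> sFL; apply/subsetP => C.
rewrite ushadow_on_iterE ?(subset_trans sFL) ?layer_on_powerset // !inE.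
case/andP => -> /exists_inP [E /(subsetP sFL)].
rewrite inE => /andP [_ /eqP cE] /andP [sEC /eqP cCE].
by rewrite (card_subsetD sEC) cE cCE eqxx.
Qed.

Lemma ushadow_on_iter_star X x r t :
  iter t (ushadow_on X) (star_on X x r.+1) = star_on X x (r.+1 + t).
Proof.
have sSX := star_on_powerset X x r.+1.
apply/eqP; rewrite eqEsubset; apply/andP; split; apply/subsetP => C.
  move=> /[dup] /(subsetP (ushadow_on_iter_layer_on t (star_on_layer_on X x r.+1))) CL.
  rewrite ushadow_on_iterE // inE => /andP [_ /exists_inP [E]].
  by rewrite inE => /andP [_ xE] /andP [/subsetP sEC _]; rewrite inE CL sEC.
rewrite !inE => /andP [/andP [sCX /eqP cC] xC].
have [E sECx cE] : exists2 E : {set T}, E \subset C :\ x & #|E| = r.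
  by apply: exists_subset_card; move: cC; rewrite (cardsD1 x) xC add1n; lia.
move: sECx; rewrite subsetD1 => /andP [sEC xE].
have sxEC : x |: E \subset C by rewrite subUset sub1set xC.
have cxE : #|x |: E| = r.+1 by rewrite cardsU1 xE cE.
rewrite ushadow_on_iterE // inE sCX; apply/exists_inP; exists (x |: E).
  by rewrite !inE (subset_trans sxEC sCX) cxE !eqxx.
by rewrite sxEC -(eqn_add2l r.+1) -{1}cxE -card_subsetD // cC eqxx.
Qed.

Lemma ushadow_on_iter_D1 X x r t F : F \subset layer_on (X :\ x) r ->
  iter t (ushadow_on X) F :|: star_on X x (r + t) =
  iter t (ushadow_on (X :\ x)) F :|: star_on X x (r + t).
Proof.
move=> sFL; have sFX' := subset_trans sFL (layer_on_powerset _ _).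
have sFX : F \subset powerset X by rewrite (subset_trans sFX') ?powersetS ?subD1set.
have sFLX : F \subset layer_on X r by rewrite (subset_trans sFL) ?layer_onS ?subD1set.
apply/setP => C; rewrite !in_setU; case xC: (x \in C); last first.
  by rewrite !ushadow_on_iterE // !inE subsetD1 xC andbT !andbF !orbF.
rewrite [in RHS]ushadow_on_iterE // [in X in _ = X || _]inE subsetD1 xC andbF /=.
apply/orP/idP => [[CI|//]|]; last by right.
by rewrite inE (subsetP (ushadow_on_iter_layer_on _ sFLX)) ?xC.
Qed.

Lemma card_ushadow_on_iter_star X x r t F : F \subset layer_on (X :\ x) r.+1 ->
  #|iter t (ushadow_on X) (F :|: star_on X x r.+1)| =
  #|iter t (ushadow_on (X :\ x)) F| + #|star_on X x (r.+1 + t)|.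
Proof.
move=> sFL; have sFX' := subset_trans sFL (layer_on_powerset _ _).
have sFX : F \subset powerset X by rewrite (subset_trans sFX') ?powersetS ?subD1set.
have sSX := star_on_powerset X x r.+1.
rewrite ushadow_on_iterU // ushadow_on_iter_star ushadow_on_iter_D1 //.
by rewrite cardsU_disjoint // (disjoint_layer_on_star _ (ushadow_on_iter_layer_on _ sFL)).
Qed.

Lemma ushadow_on_iter_setU1 X x t F : x \in X -> F \subset powerset (X :\ x) ->
  iter t (ushadow_on X) [set x |: E | E in F] =
  [set x |: C | C in iter t (ushadow_on (X :\ x)) F].
Proof.
move=> xX sFX'; have xF : {in F, forall E, x \notin E}.
  by move=> E /(subsetP sFX'); rewrite powersetE subsetD1 => /andP [].
have sxFX : [set x |: E | E in F] \subset powerset X.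
  apply/subsetP => _ /imsetP [E /(subsetP sFX') + ->].
  by rewrite !powersetE subsetD1 subUset sub1set xX => /andP [].
apply/setP => C; rewrite ushadow_on_iterE // inE; apply/andP/imsetP.
  case=> sCX /exists_inP [_ /imsetP [E EF ->] /andP [sxEC /eqP cC]].
  have xE := xF E EF; move: sxEC; rewrite subUset sub1set => /andP [xC sEC].
  exists (C :\ x); last by rewrite setD1K.
  rewrite ushadow_on_iterE // inE setSD //=; apply/exists_inP; exists E => //.
  by rewrite subsetD1 sEC xE -cC setDDl eqxx.
case=> D; rewrite ushadow_on_iterE // inE => /andP [sDX'].
case/exists_inP => E EF /andP [sED /eqP cD] ->.
have xE := xF E EF; have xD : x \notin D by move: sDX'; rewrite subsetD1 => /andP [].
split; first by rewrite subUset sub1set xX (subset_trans sDX') ?subD1set.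
apply/exists_inP; exists (x |: E); first exact: imset_f.
by rewrite setUS //= setU1D // cD eqxx.
Qed.
Lemma card_ushadow_on_iter_setU1 X x t F : x \in X -> F \subset powerset (X :\ x) ->
  #|iter t (ushadow_on X) [set x |: E | E in F]| = #|iter t (ushadow_on (X :\ x)) F|.
Proof.
move=> xX sFX'; rewrite ushadow_on_iter_setU1 // card_imset_setU1 // => C.
by rewrite ushadow_on_iterE // inE subsetD1 => /andP [/andP []].
Qed.
End Shadows.

Arguments shadow {T} F.

Section Minimality.
Variable T : finType.
Local Notation fam := {set {set T}}.
Implicit Types (X C D E : {set T}) (A B F G : fam) (x : T) (k r t : nat).

(* Unlike in the statement, t = 0 is included; it holds trivially. *)
Definition shadows_minimal_on X r A := forall t G, G \subset layer_on X r ->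
  #|G| = #|A| -> #|iter t shadow A| <= #|iter t shadow G|.

Definition ushadows_minimal_on X r B := forall t G, G \subset layer_on X r ->
  #|G| = #|B| -> #|iter t (ushadow_on X) B| <= #|iter t (ushadow_on X) G|.

Definition link x F : fam := [set E : {set T} | x \notin E & x |: E \in F].

Lemma shadows_minimal_avoid X k r A : #|X| = k.+1 -> A \subset layer_on X r.+1 ->
  shadows_minimal_on X r.+1 A -> #|A| <= 'C(k, r.+1) ->
  exists2 x, x \in X & {in A, forall E, x \notin E}.
Proof.
move=> cX sAL minA leAk.
have [/exists_inP [x xX /forall_inP xA]|/exists_inPn coverX] :=
  boolP [exists x in X, [forall E in A, x \notin E]]; first by exists x.
have /card_gt0P [x0 x0X] : 0 < #|X| by rewrite cX.
have cX' : #|X :\ x0| = k by move: cX; rewrite (cardsD1 x0) x0X => -[].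
have [G sGL cG] : exists2 G : fam, G \subset layer_on (X :\ x0) r.+1 & #|G| = #|A|.
  by apply: exists_subset_card; rewrite card_layer_on cX'.
have singletons : layer_on X 1 \subset iter r shadow A.
  apply/subsetP => D; rewrite inE => /andP [sDX /cards1P [y defD]].
  have yX : y \in X by rewrite -sub1set -defD.
  have /forall_inPn [E EA] := coverX y yX; rewrite negbK => yE.
  rewrite shadow_iterE inE defD; apply/exists_inP; exists E => //.
  move: (subsetP sAL E EA); rewrite inE => /andP [_ /eqP cE].
  by rewrite sub1set yE cardsDS ?sub1set // cE cards1 subn1 eqxx.
have shG : iter r shadow G \subset layer_on (X :\ x0) 1.
  by apply: shadow_iter_layer_on; rewrite add1n.
have sGLX := subset_trans sGL (layer_onS r.+1 (subD1set X x0)).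
have := leq_trans (subset_leq_card singletons)
  (leq_trans (minA r G sGLX cG) (subset_leq_card shG)).
by rewrite !card_layer_on cX cX' !bin1 ltnn.
Qed.

Lemma ushadows_minimal_cover X k r A : #|X| = k.+1 -> r < k ->
  A \subset layer_on X r.+1 -> ushadows_minimal_on X r.+1 (layer_on X r.+1 :\: A) ->
  'C(k, r.+1) < #|A| ->
  exists2 x, x \in X & {in layer_on X r.+1 :\: A, forall E, x \in E}.
Proof.
move=> cX ltrk sAL minB ltkA; set B := layer_on X r.+1 :\: A.
have [/exists_inP [x xX /forall_inP xB]|/exists_inPn avoidX] :=
  boolP [exists x in X, [forall E in B, x \in E]]; first by exists x.
have /card_gt0P [x0 x0X] : 0 < #|X| by rewrite cX.
have cX' : #|X :\ x0| = k by move: cX; rewrite (cardsD1 x0) x0X => -[].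
have sBL : B \subset layer_on X r.+1 := subsetDl _ _.
have sSX := star_on_powerset X x0 r.+1.
have [G sGS cG] : exists2 G : fam, G \subset star_on X x0 r.+1 & #|G| = #|B|.
  apply: exists_subset_card; rewrite card_star_on // cX'.
  have : #|B| = 'C(k.+1, r.+1) - #|A| by rewrite cardsDS // card_layer_on cX.
  by rewrite binS; lia.
have [t ekt] : exists t, k = r.+1 + t by exists (k - r.+1); rewrite subnKC.
have complements : layer_on X k \subset iter t (ushadow_on X) B.
  apply/subsetP => C; rewrite inE => /andP [sCX /eqP cC].
  have /cards1P [y XCy] : #|X :\: C| == 1 by rewrite cardsDS // cX cC subSnn.
  have /setDP [yX yC] : y \in X :\: C by rewrite XCy set11.
  have defC : C = X :\ y by rewrite -XCy setDDr setDv set0U (setIidPr sCX).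
  have /forall_inPn [E EB yE] := avoidX y yX.
  rewrite ushadow_on_iterE ?(subset_trans sBL) ?layer_on_powerset // inE sCX.
  apply/exists_inP; exists E => //.
  move: (subsetP sBL E EB); rewrite inE => /andP [sEX /eqP cE].
  have sEC : E \subset C by rewrite defC subsetD1 sEX.
  by rewrite sEC cardsDS // cC cE ekt addKn eqxx.
have bounded : iter t (ushadow_on X) G \subset star_on X x0 k.
  by rewrite ekt -ushadow_on_iter_star; apply: ushadow_on_iterS.
have sGL := subset_trans sGS (star_on_layer_on X x0 r.+1).
have := leq_trans (subset_leq_card complements)
  (leq_trans (minB t G sGL cG) (subset_leq_card bounded)).
by rewrite card_layer_on cX ekt addSn card_star_on // cX' ekt addSn !binSn ltnn.
Qed.

Lemma minimal_on_D1 X x r A : A \subset layer_on (X :\ x) r.+1 ->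
  shadows_minimal_on X r.+1 A -> ushadows_minimal_on X r.+1 (layer_on X r.+1 :\: A) ->
  shadows_minimal_on (X :\ x) r.+1 A /\
  ushadows_minimal_on (X :\ x) r.+1 (layer_on (X :\ x) r.+1 :\: A).
Proof.
move=> sAL minA minB; have sLL := layer_onS r.+1 (subD1set X x).
split=> t G sGL cG; first exact: minA t G (subset_trans sGL sLL) cG.
set B' := layer_on (X :\ x) r.+1 :\: A.
have dA := disjoint_layer_on_star (r.+1) sAL.
have dB' := disjoint_layer_on_star (r.+1) (subsetDl _ A : B' \subset _).
have dG := disjoint_layer_on_star (r.+1) sGL.
have defB : layer_on X r.+1 :\: A = B' :|: star_on X x r.+1.
  rewrite {1}(layer_on_D1 X x) setDUl; congr (_ :|: _).
  by apply/setDidPl; rewrite disjoint_sym.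
have := minB t (G :|: star_on X x r.+1).
rewrite defB !card_ushadow_on_iter_star ?subsetDl // leq_add2r; apply.
  by rewrite subUset (subset_trans sGL sLL) star_on_layer_on.
by rewrite !cardsU_disjoint // cG.
Qed.

Lemma link_layer_on X x r A :
  A \subset layer_on X r.+1 -> link x A \subset layer_on (X :\ x) r.
Proof.
move=> sAL; apply/subsetP => E; rewrite inE => /andP [xE /(subsetP sAL)].
rewrite !inE subUset cardsU1 xE add1n eqSS subsetD1 xE andbT.
by case/andP => /andP [_ ->] ->.
Qed.

Lemma link_decomposition X x r A : A \subset layer_on X r.+1 ->
  {in layer_on X r.+1 :\: A, forall E, x \in E} ->
  A = layer_on (X :\ x) r.+1 :|: [set x |: E | E in link x A].
Proof.
move=> sAL xB; apply/setP => C; rewrite in_setU; apply/idP/orP => [CA|].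
  case xC: (x \in C).
    by right; apply/imsetP; exists (C :\ x); rewrite ?setD1K // inE !inE eqxx setD1K.
  by left; move: (subsetP sAL C CA); rewrite !inE subsetD1 xC andbT.
case=> [CL|/imsetP [E + ->]]; last by rewrite inE => /andP [].
apply: contraTT (notin_layer_on_D1 CL) => CA; rewrite negbK; apply: xB.
by rewrite in_setD CA (subsetP (layer_onS r.+1 (subD1set X x))).
Qed.

Lemma link_complement X x r A : x \in X -> A \subset layer_on X r.+1 ->
  {in layer_on X r.+1 :\: A, forall E, x \in E} ->
  layer_on X r.+1 :\: A = [set x |: E | E in layer_on (X :\ x) r :\: link x A].
Proof.
move=> xX sAL xB; apply/setP => C; apply/idP/imsetP => [CB|[E]].
  have xC := xB C CB; move: CB; rewrite in_setD => /andP [CA CL].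
  exists (C :\ x); last by rewrite setD1K.
  rewrite in_setD [_ \in link _ _]inE setD1K // (negbTE CA) andbF /=.
  move: CL; rewrite !inE => /andP [sCX /eqP cC].
  by rewrite setSD //= -eqSS -cC (cardsD1 x C) xC.
move=> /setDP [EL ElA] ->; have xE := notin_layer_on_D1 EL.
rewrite in_setD (subsetP (star_on_layer_on X x r.+1)) ?star_onE ?imset_f // andbT.
by apply: contra ElA => xEA; rewrite inE xE.
Qed.

Lemma minimal_on_link X x r A : x \in X -> r < #|X :\ x| -> A \subset layer_on X r.+1 ->
  {in layer_on X r.+1 :\: A, forall E, x \in E} ->
  shadows_minimal_on X r.+1 A -> ushadows_minimal_on X r.+1 (layer_on X r.+1 :\: A) ->
  shadows_minimal_on (X :\ x) r (link x A) /\
  ushadows_minimal_on (X :\ x) r (layer_on (X :\ x) r :\: link x A).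
Proof.
move=> xX ltrX sAL xB minA minB.
have defA := link_decomposition sAL xB; have defB := link_complement xX sAL xB.
have sLA := link_layer_on x sAL; set Ax := link x A in defA defB sLA *.
have cone F : F \subset layer_on (X :\ x) r ->
    [set x |: E | E in F] \subset star_on X x r.+1.
  by move=> sFL; rewrite star_onE // imsetS.
have coneL F : F \subset layer_on (X :\ x) r ->
    [set x |: E | E in F] \subset layer_on X r.+1.
  by move=> /cone sS; apply: subset_trans sS (star_on_layer_on _ _ _).
have avoid F : F \subset layer_on (X :\ x) r -> {in F, forall E, x \notin E}.
  by move=> sFL E /(subsetP sFL) /notin_layer_on_D1.
have sLX F : F \subset layer_on (X :\ x) r -> F \subset powerset (X :\ x).
  by move=> sFL; apply: subset_trans sFL (layer_on_powerset _ _).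
have disjL F : F \subset layer_on (X :\ x) r ->
    [disjoint layer_on (X :\ x) r.+1 & [set x |: E | E in F]].
  by move=> /cone sS; apply: disjointWr sS (disjoint_layer_on_star _ (subxx _)).
have sBL : layer_on (X :\ x) r :\: Ax \subset layer_on (X :\ x) r := subsetDl _ _.
split=> t G sGL cG.
  have := minA t (layer_on (X :\ x) r.+1 :|: [set x |: E | E in G]).
  rewrite defA !card_shadow_iter_link // leq_add2l; apply.
    by rewrite subUset layer_onS ?subD1set // coneL.
  by rewrite !cardsU_disjoint ?disjL // !card_imset_setU1 ?cG //; apply: avoid.
have := minB t [set x |: E | E in G].
rewrite defB !card_ushadow_on_iter_setU1 ?sLX //; apply; first exact: coneL.
by rewrite !card_imset_setU1 ?cG //; apply: avoid.
Qed.

End Minimality.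

Section Relabelling.
Variable T : finType.
Local Notation fam := {set {set T}}.
Implicit Types (X Y E : {set T}) (F G : fam) (s : {perm T}) (x : T).

Definition fam_image s F : fam := [set s @: E | E : {set T} in F].

Lemma fam_imageU s F G : fam_image s (F :|: G) = fam_image s F :|: fam_image s G.
Proof. exact: imsetU. Qed.

Lemma fam_image_setU1 s x F :
  fam_image s [set x |: E | E in F] = [set s x |: E | E in fam_image s F].
Proof. by rewrite /fam_image -!imset_comp; apply: eq_imset => E /=; rewrite imsetU1. Qed.

Lemma fam_image_eq_in s s' X F : F \subset powerset X ->
  {in X, forall y, s y = s' y} -> fam_image s F = fam_image s' F.
Proof.
move=> sFX ss'; apply: eq_in_imset => E /(subsetP sFX); rewrite powersetE => sEX.
by apply: eq_in_imset => y /(subsetP sEX); apply: ss'.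
Qed.

Lemma fam_image_powerset s X F :
  F \subset powerset X -> fam_image s F \subset powerset (s @: X).
Proof.
move=> sFX; apply/subsetP => _ /imsetP [E /(subsetP sFX) + ->].
by rewrite !powersetE; apply: imsetS.
Qed.

Lemma fam_image_layer_on s X Y r :
  s @: X = Y -> fam_image s (layer_on X r) = layer_on Y r.
Proof.
move=> sXY; apply/setP => C; apply/imsetP/idP => [[E] | ].
  rewrite !inE => /andP [sEX cE] ->.
  by rewrite card_imset ?cE ?andbT; [rewrite -sXY imsetS | apply: perm_inj].
rewrite inE => /andP [sCY cC]; exists (s^-1 @: C)%g.
  rewrite inE card_imset ?cC ?andbT; last exact: perm_inj.
  apply/subsetP => _ /imsetP [y yC ->].
  by rewrite -(mem_imset _ _ (@perm_inj _ s)) permKV sXY (subsetP sCY).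
by rewrite -imset_comp (eq_imset _ (permKV s)) imset_id.
Qed.
End Relabelling.

Section Colex.
Variable N : nat.
Local Notation fam := {set {set 'I_N}}.
Implicit Types (X C D E : {set 'I_N}) (A F : fam) (m r : nat).

Definition ord_prefix m : {set 'I_N} := [set i : 'I_N | i < m].

Lemma ord_prefixS m (lt_mN : m < N) : ord_prefix m.+1 = Ordinal lt_mN |: ord_prefix m.
Proof. by apply/setP => i; rewrite !inE ltnS leq_eqVlt. Qed.

Lemma card_ord_prefix m : m <= N -> #|ord_prefix m| = m.
Proof.
elim: m => [_|m IH lt_mN].
  by apply/eqP; rewrite cards_eq0; apply/eqP/setP => i; rewrite !inE.
by rewrite (ord_prefixS lt_mN) cardsU1 IH ?(ltnW lt_mN) // inE ltnn.
Qed.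

Lemma colex_lt_prefix m D E :
  colex_lt D E -> E \subset ord_prefix m -> D \subset ord_prefix m.
Proof.
case/existsP => z /and3P [zE zD /forallP maxz] sEm; apply/subsetP => y yD.
case yE: (y \in E); first exact: (subsetP sEm).
have := maxz y; rewrite !inE yD yE /= => le_yz.
by have := subsetP sEm z zE; rewrite !inE; apply: leq_ltn_trans.
Qed.

Lemma colex_ltD1 z D E :
  z \in D -> z \in E -> colex_lt D E -> colex_lt (D :\ z) (E :\ z).
Proof.
move=> zD zE /existsP [y /and3P [yE yD /forallP maxy]].
have yz : y != z by apply: contraNneq yD => ->.
apply/existsP; exists y; rewrite !inE yz yE yD /=; apply/forallP => w.
by apply/implyP => wDE; apply: (implyP (maxy w)); move: wDE; rewrite !inE; case: (w == z).
Qed.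

Lemma colex_initial_layer_on m r : colex_initial_segment r (layer_on (ord_prefix m) r).
Proof.
split; first by apply/subsetP => E; rewrite !inE => /andP [].
move=> E D; rewrite !inE => /andP [sEm _] -> ltDE; rewrite andbT.
exact: colex_lt_prefix ltDE sEm.
Qed.

Lemma colex_initial_cone m (lt_mN : m < N) r F :
  colex_initial_segment r F -> F \subset powerset (ord_prefix m) ->
  colex_initial_segment r.+1
    (layer_on (ord_prefix m) r.+1 :|: [set Ordinal lt_mN |: E | E in F]).
Proof.
set z := Ordinal lt_mN => -[sFL downF] sFm.
have zF E : E \in F -> z \notin E.
  move=> /(subsetP sFm); rewrite powersetE => /subsetP sEm.
  by apply/negP => /sEm; rewrite inE ltnn.
have sFm1 : [set z |: E | E in F] \subset powerset (ord_prefix m.+1).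
  apply/subsetP => _ /imsetP [E /(subsetP sFm) + ->].
  by rewrite !powersetE (ord_prefixS lt_mN); apply: setUS.
have zm : z \notin ord_prefix m by rewrite inE ltnn.
have prefixm : ord_prefix m = ord_prefix m.+1 :\ z by rewrite (ord_prefixS lt_mN) setU1K.
have sCm1 : layer_on (ord_prefix m) r.+1 :|: [set z |: E | E in F] \subset
    powerset (ord_prefix m.+1).
  rewrite subUset sFm1 andbT (subset_trans (layer_on_powerset _ _)) //.
  by rewrite powersetS prefixm subD1set.
split.
  rewrite subUset; apply/andP; split; apply/subsetP => E.
    by rewrite !inE => /andP [_ ->].
  case/imsetP => {}E EF ->; move: (subsetP sFL E EF).
  by rewrite !inE cardsU1 zF // => /eqP ->.
move=> B D BC; rewrite inE => cD ltDB.
have sDm1 : D \subset ord_prefix m.+1.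
  by apply: colex_lt_prefix ltDB _; rewrite -powersetE (subsetP sCm1).
rewrite in_setU; case zD: (z \in D); [apply/orP; right | apply/orP; left]; last first.
  by rewrite inE cD andbT prefixm subsetD1 sDm1 zD.
move: BC; rewrite in_setU => /orP [BL|/imsetP [E EF defB]].
  move: BL; rewrite inE => /andP [/(colex_lt_prefix ltDB) /subsetP sDm _].
  by move: (sDm z zD); rewrite (negbTE zm).
apply/imsetP; exists (D :\ z); last by rewrite setD1K.
apply: (downF E) => //.
  by rewrite inE -eqSS; move: cD; rewrite (cardsD1 z) zD.
have := colex_ltD1 zD (_ : z \in B) ltDB; rewrite defB setU1K ?zF //; apply.
by rewrite setU11.
Qed.

Lemma perm_extend (s : {perm 'I_N}) X x m (lt_mN : m < N) :
  x \in X -> s @: (X :\ x) = ord_prefix m ->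
  exists s' : {perm 'I_N}, [/\ s' x = Ordinal lt_mN,
    {in X :\ x, forall y, s' y = s y} & s' @: X = ord_prefix m.+1].
Proof.
move=> xX sX; exists (s * tperm (s x) (Ordinal lt_mN))%g.
have fixed : {in X :\ x, forall y, (s * tperm (s x) (Ordinal lt_mN))%g y = s y}.
  move=> y yX; rewrite permM tpermD //.
    by apply: contraTneq yX => /perm_inj ->; rewrite !inE eqxx.
  by apply: contraTneq (imset_f s yX) => <-; rewrite sX inE ltnn.
split=> //; first by rewrite permM tpermL.
by rewrite -(setD1K xX) imsetU1 permM tpermL (eq_in_imset fixed) sX ord_prefixS.
Qed.
End Colex.

Arguments ord_prefix {N} m.

Section Main.
Variable N : nat.
Local Notation fam := {set {set 'I_N}}.
Implicit Types (X : {set 'I_N}) (A : fam) (k r : nat).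

Lemma colex_relabelling_trivial k X r A : #|X| = k -> A \subset layer_on X r ->
  #|layer_on X r| <= 1 ->
  exists2 s : {perm 'I_N}, colex_initial_segment r (fam_image s A) & s @: X = ord_prefix k.
Proof.
move=> cX sAL small.
have le_kN : k <= N by rewrite -cX (leq_trans (max_card _)) ?card_ord.
have [s sX] := perm_imset_of_card (etrans cX (esym (card_ord_prefix le_kN))).
exists s => //.
have [->|[E EA]] := set_0Vmem A.
  by rewrite /fam_image imset0; split => [|? ?]; rewrite ?sub0set ?inE.
have -> : A = layer_on X r.
  apply/eqP; rewrite eqEcard sAL (leq_trans small) // card_gt0; apply/set0Pn; by exists E.
by rewrite (fam_image_layer_on _ sX); apply: colex_initial_layer_on.
Qed.

Theorem colex_relabelling k X r A : #|X| = k -> A \subset layer_on X r ->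
  shadows_minimal_on X r A -> ushadows_minimal_on X r (layer_on X r :\: A) ->
  exists2 s : {perm 'I_N}, colex_initial_segment r (fam_image s A) & s @: X = ord_prefix k.
Proof.
elim: k X r A => [|k IH] X r A cX sAL minA minB.
  by apply: colex_relabelling_trivial; rewrite // card_layer_on cX bin0n leq_b1.
have [small|] := leqP #|layer_on X r| 1; first exact: colex_relabelling_trivial.
have lt_kN : k < N by rewrite -cX (leq_trans (max_card _)) ?card_ord.
rewrite card_layer_on cX.
case: r sAL minA minB => [|r] sAL minA minB; first by rewrite bin0.
move=> big; have ltrk : r < k.
  rewrite ltnNge; apply: contraTN big; rewrite leq_eqVlt -leqNgt => /orP [/eqP ->|lt_kr].
    by rewrite binn.
  by rewrite bin_small.
have [smallA|bigA] := leqP #|A| 'C(k, r.+1).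
  have [x xX xA] := shadows_minimal_avoid cX sAL minA smallA.
  have sAL' := sub_layer_on_D1 sAL xA.
  have [minA' minB'] := minimal_on_D1 sAL' minA minB.
  have cX' : #|X :\ x| = k by move: cX; rewrite (cardsD1 x) xX => -[].
  have [s sA sX'] := IH _ _ _ cX' sAL' minA' minB'.
  have [s' [_ s's s'X]] := perm_extend lt_kN xX sX'.
  have sAP := subset_trans sAL' (layer_on_powerset _ _).
  by exists s' => //; rewrite (fam_image_eq_in sAP s's).
have [x xX xB] := ushadows_minimal_cover cX ltrk sAL minB bigA.
have cX' : #|X :\ x| = k by move: cX; rewrite (cardsD1 x) xX => -[].
have ltrX : r < #|X :\ x| by rewrite cX'.
have [minAx minBx] := minimal_on_link xX ltrX sAL xB minA minB.
have sAxL := link_layer_on x sAL.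
have [s sAx sX'] := IH _ _ _ cX' sAxL minAx minBx.
have [s' [s'x s's s'X]] := perm_extend lt_kN xX sX'.
have sAxP := subset_trans sAxL (layer_on_powerset _ _).
exists s' => //.
rewrite (link_decomposition sAL xB) fam_imageU fam_image_setU1 s'x.
have s'X' : s' @: (X :\ x) = ord_prefix k by rewrite -sX'; apply: eq_in_imset.
rewrite (fam_image_eq_in sAxP s's) (fam_image_layer_on _ s'X').
by apply: colex_initial_cone; rewrite // -sX' fam_image_powerset.
Qed.
End Main.

Theorem corollary7 (n r : nat) (A : {set {set 'I_n}})
  (hA : A \subset layer n r) :
  let B := layer n r :\: A in
  (forall t : nat, 0 < t -> lshadow_minimal r t A) ->
  (forall t : nat, 0 < t -> ushadow_minimal r t B) ->
  exists C : {set {set 'I_n}},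
    colex_initial_segment r C /\ fam_isomorphic A C.
Proof.
move=> B minA minB.
have layerT : layer_on [set: 'I_n] r = layer n r by apply/setP => E; rewrite !inE subsetT.
have shadowT : @lshadow n =1 shadow by move=> F; apply/setP => D; rewrite !inE.
have ushadowT : @ushadow n =1 ushadow_on [set: 'I_n].
  by move=> F; apply/setP => C; rewrite !inE subsetT.
have cT : #|[set: 'I_n]| = n by rewrite cardsT card_ord.
have sAT : A \subset layer_on [set: 'I_n] r by rewrite layerT.
have minAT : shadows_minimal_on [set: 'I_n] r A.
  move=> [|t] G sGL cG; first by rewrite cG.
  have := minA t.+1 isT G; rewrite /lshadow_iter !(eq_iter shadowT) -layerT; exact.
have minBT : ushadows_minimal_on [set: 'I_n] r (layer_on [set: 'I_n] r :\: A).
  move=> [|t] G sGL cG; first by rewrite cG.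
  have := minB t.+1 isT G; rewrite /B /ushadow_iter !(eq_iter ushadowT) -layerT; exact.
have [s sA _] := colex_relabelling cT sAT minAT minBT.
by exists (fam_image s A); split => //; exists s.
Qed.
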